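(* For every integer $n\ge 1$, \[ \sum_{k=0}^{n}\Big(-\frac{1}{4}\Big)^k\binom{n}{k}\binom{1+2k}{k}\,k\,H_{1+2k} =\frac{3n}{2^{1+2n}(1-4n^2)}\binom{1+2n}{n}\Big\{3H_n-4H_{1+2n}-\frac{16n}{1-4n^2}-\frac{2-14n}{3n}\Big\}+\frac{1}{1+n}. \]
   Context: For an integer $m\ge 0$, $H_m$ denotes the $m$-th harmonic number: $H_0=0$ and $H_m=\sum_{j=1}^m \frac1j$ for $m\ge1$. $\binom{n}{k}$ is the usual binomial coefficient. *)

From HB Require Import structures.
From mathcomp Require Import all_boot all_order all_algebra.
Set Implicit Arguments. Unset Strict Implicit. Unset Printing Implicit Defensive.
Import Order.TTheory GRing.Theory Num.Theory.
Local Open Scope ring_scope.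

Definition harm (m : nat) : rat := \sum_(1 <= j < m.+1) (j%:R)^-1.

From mathcomp Require Import all_boot all_order all_algebra.
From mathcomp Require Import ring lra zify.
Import GRing.Theory Num.Theory.
Local Open Scope ring_scope.

(* Creative telescoping.  Write S_n for the left-hand side,
   B_m = sum_j (-1/4)^j C(m,j) C(2j,j) and M_m = sum_j (-1/4)^j C(m,j) C(2j,j) (j-1)(4j+1).
   Zeilberger-style certificates give
     (m+1) B_(m+1) = (2m+1)/2 B_m,  hence B_m = C(2m,m)/4^m,
     (2m-3)(2m-1) M_m = (6m^2-m-3) B_m,
     (2n-1)(n+1)/2 S_n - n(n+2) S_(n+1) = -(M_(n+1) + 1)/2,
   where the last certificate carries the harmonic numbers along because
   H_(2k+3) - H_(2k+1) is a rational function of k.  The right-hand side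
   satisfies the same first-order recurrence and agrees with S_1. *)

Ltac field_nonzero :=
  repeat (apply/andP; split);
  first [ assumption | by rewrite expf_neq0
        | apply/lt0r_neq0; nra | apply/ltr0_neq0; nra ].

Lemma bin_odd_central k : ('C(1 + 2 * k, k) * k.+1 = (1 + 2 * k) * 'C(2 * k, k))%N.
Proof.
have := mul_bin_down (1 + 2 * k) k; rewrite add1n /= => ->.
by rewrite mulnC; congr (_ * _)%N; lia.
Qed.

Lemma bin_centralS k : 'C(2 * k.+1, k.+1) = (2 * 'C(1 + 2 * k, k))%N.
Proof.
have k_le : (k <= (2 * k).+1)%N by lia.
rewrite mulnS add2n binS add1n.
have e : k.+1 = ((2 * k).+1 - k)%N by lia.
by rewrite {1}e bin_sub // addnn -mul2n.
Qed.

Section BinomialRatios.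
Context {R : numFieldType}.

Let natr1_neq0 m : m%:R + 1 != 0 :> R.
Proof. by rewrite natr1 pnatr_eq0. Qed.

Lemma natr_bin_down m j :
  'C(m, j)%:R = (m%:R + 1 - j%:R) / (m%:R + 1) * 'C(m.+1, j)%:R :> R.
Proof.
have [j_le|j_gt] := leqP j m.+1; last by rewrite !bin_small ?mulr0 // ltnW.
move/(congr1 (fun x => x%:R : R)): (mul_bin_down m.+1 j).
rewrite !natrM natrB // -natr1 => e.
by apply: (mulfI (natr1_neq0 m)); rewrite e; field.
Qed.

Lemma natr_bin_left m j :
  'C(m, j.+1)%:R = (m%:R - j%:R) / (j%:R + 1) * 'C(m, j)%:R :> R.
Proof.
have [j_le|j_gt] := leqP j m; last by rewrite !bin_small ?mulr0 // ltnW.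
move/(congr1 (fun x => x%:R : R)): (mul_bin_left m j).
rewrite !natrM natrB // -natr1 => e.
by apply: (mulfI (natr1_neq0 j)); rewrite e; field.
Qed.

Lemma natr_bin_odd_central k :
  'C(1 + 2 * k, k)%:R = (2 * k%:R + 1) / (k%:R + 1) * 'C(2 * k, k)%:R :> R.
Proof.
move/(congr1 (fun x => x%:R : R)): (bin_odd_central k).
rewrite !natrM natrD -natr1 => e.
by apply: (mulIf (natr1_neq0 k)); rewrite e; field.
Qed.

Lemma natr_bin_centralS k :
  'C(2 * k.+1, k.+1)%:R = 2 * (2 * k%:R + 1) / (k%:R + 1) * 'C(2 * k, k)%:R :> R.
Proof. by rewrite bin_centralS natrM natr_bin_odd_central mulrA mulrA. Qed.

End BinomialRatios.

Definition cbin_term (m j : nat) : rat :=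
  (- (1 / 4)) ^+ j * 'C(m, j)%:R * 'C(2 * j, j)%:R.

Definition cbin_sum (m : nat) : rat := \sum_(0 <= j < m.+1) cbin_term m j.

Lemma cbin_term0 m : cbin_term m 0 = 1.
Proof. by rewrite /cbin_term expr0 bin0 !mul1r. Qed.

Lemma cbin_term_out m : cbin_term m m.+1 = 0.
Proof. by rewrite /cbin_term bin_small // mulr0 mul0r. Qed.

Lemma cbin_term_telescope m j :
  cbin_term m.+1 j.+1 * (j%:R + 1) ^+ 2 - cbin_term m.+1 j * j%:R ^+ 2
  = (2 * m%:R + 1) * (m%:R + 1) / 2 * cbin_term m j - (m%:R + 1) ^+ 2 * cbin_term m.+1 j.
Proof.
have m_ge0 := ler0n rat m; have j_ge0 := ler0n rat j.
rewrite /cbin_term (natr_bin_down m j) natr_bin_left natr_bin_centralS [_ ^+ j.+1]exprS.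
by field; field_nonzero.
Qed.

Lemma cbin_sumS m : (m%:R + 1) * cbin_sum m.+1 = (2 * m%:R + 1) / 2 * cbin_sum m.
Proof.
have m1_neq0 : m%:R + 1 != 0 :> rat by rewrite natr1 pnatr_eq0.
have := telescope_sumr (fun j => cbin_term m.+1 j * j%:R ^+ 2) (leq0n m.+2).
rewrite cbin_term_out mul0r expr0n mulr0 subrr.
under eq_bigr => j _ do rewrite -natr1 cbin_term_telescope.
rewrite sumrB -!mulr_sumr big_nat_recr //= cbin_term_out addr0.
move/subr0_eq; rewrite -/(cbin_sum m) -/(cbin_sum m.+1) => e.
by apply: (mulfI m1_neq0); rewrite mulrA -expr2 -e; field.
Qed.

Lemma cbin_sumE m : cbin_sum m = 'C(2 * m, m)%:R / 4 ^+ m.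
Proof.
elim: m => [|m IH]; first by rewrite /cbin_sum big_nat1 /cbin_term.
have m1_neq0 : m%:R + 1 != 0 :> rat by rewrite natr1 pnatr_eq0.
apply: (mulfI m1_neq0); rewrite cbin_sumS IH natr_bin_centralS exprS.
by field; rewrite expf_neq0.
Qed.

Definition cbin_moment (m : nat) : rat :=
  \sum_(0 <= j < m.+1) cbin_term m j * (j%:R - 1) * (4 * j%:R + 1).

Definition cbin_moment_cert (m j : nat) : rat :=
  cbin_term m j * j%:R ^+ 2 * (26 - 36 * m%:R + 8 * (2 * m%:R - 1) * j%:R).

Lemma cbin_moment_telescope m j :
  cbin_moment_cert m j.+1 - cbin_moment_cert m j
  = (6 * m%:R ^+ 2 - m%:R - 3) * cbin_term m j
    - (2 * m%:R - 3) * (2 * m%:R - 1) * (cbin_term m j * (j%:R - 1) * (4 * j%:R + 1)).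
Proof.
have m_ge0 := ler0n rat m; have j_ge0 := ler0n rat j.
rewrite /cbin_moment_cert /cbin_term natr_bin_left natr_bin_centralS [_ ^+ j.+1]exprS -natr1.
by field; field_nonzero.
Qed.

Lemma cbin_momentE m :
  cbin_moment m
  = (6 * m%:R ^+ 2 - m%:R - 3) / ((2 * m%:R - 3) * (2 * m%:R - 1))
    * ('C(2 * m, m)%:R / 4 ^+ m).
Proof.
have [nz3 nz1] : 2 * m%:R - 3 != 0 :> rat /\ 2 * m%:R - 1 != 0 :> rat.
  by split; rewrite subr_eq0 -natrM ?eqr_nat ?pnatr_eq1; apply/eqP; lia.
have := telescope_sumr (cbin_moment_cert m) (leq0n m.+1).
rewrite /cbin_moment_cert cbin_term_out mul0r expr0n mulr0 !mul0r subrr.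
under eq_bigr => j _ do rewrite cbin_moment_telescope.
rewrite sumrB -!mulr_sumr -/(cbin_moment m) -/(cbin_sum m) cbin_sumE => /subr0_eq e.
apply: (mulfI (mulf_neq0 nz3 nz1)); rewrite -e.
by field; rewrite expf_neq0 ?nz3 ?nz1.
Qed.

Lemma harmS m : harm m.+1 = harm m + 1 / m.+1%:R.
Proof. by rewrite /harm big_nat_recr // div1r. Qed.

Lemma harm_oddS k :
  harm (1 + 2 * k.+1) = harm (1 + 2 * k) + 1 / (2 * k%:R + 2) + 1 / (2 * k%:R + 3).
Proof.
rewrite (_ : (1 + 2 * k.+1 = (1 + 2 * k).+2)%N); last by lia.
by rewrite 2!harmS; congr (_ + 1 / _ + 1 / _); rewrite -!natr1 ?natrD ?natrM; ring.
Qed.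

Definition hsum_term (n k : nat) : rat :=
  (- (1 / 4)) ^+ k * 'C(n, k)%:R * 'C(1 + 2 * k, k)%:R * k%:R * harm (1 + 2 * k).

Definition hsum (n : nat) : rat := \sum_(0 <= k < n.+1) hsum_term n k.

Definition hsum_cert (n k : nat) : rat :=
  (- (1 / 4)) ^+ k * 'C(n.+1, k)%:R * 'C(1 + 2 * k, k)%:R * (k%:R ^+ 3 - k%:R)
  * harm (1 + 2 * k).

Lemma hsum_term_telescope n k :
  hsum_cert n k.+1 - hsum_cert n k
  = (2 * n%:R - 1) * (n%:R + 1) / 2 * hsum_term n k - n%:R * (n%:R + 2) * hsum_term n.+1 k
    + 1 / 2 * (cbin_term n.+1 k.+1 * (k.+1%:R - 1) * (4 * k.+1%:R + 1)).
Proof.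
have n_ge0 := ler0n rat n; have k_ge0 := ler0n rat k.
rewrite /hsum_term /hsum_cert /cbin_term harm_oddS (natr_bin_down n k) natr_bin_left.
rewrite (natr_bin_odd_central k.+1) natr_bin_centralS natr_bin_odd_central.
rewrite [_ ^+ k.+1]exprS -!natr1.
by field; field_nonzero.
Qed.

Lemma hsumS n :
  (2 * n%:R - 1) * (n%:R + 1) / 2 * hsum n - n%:R * (n%:R + 2) * hsum n.+1
  = - (1 / 2) * (cbin_moment n.+1 + 1).
Proof.
have cert0 : hsum_cert n 0 = 0 by rewrite /hsum_cert expr0n subrr mulr0 mul0r.
have certN : hsum_cert n n.+2 = 0 by rewrite /hsum_cert bin_small // mulr0 !mul0r.
have moment_shift : \sum_(0 <= k < n.+2)
    cbin_term n.+1 k.+1 * (k.+1%:R - 1) * (4 * k.+1%:R + 1) = cbin_moment n.+1 + 1.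
  rewrite /cbin_moment [in RHS]big_nat_recl // [in LHS]big_nat_recr //= cbin_term_out.
  rewrite cbin_term0 !mul0r addr0; move: (\sum_(0 <= i < n.+1) _) => s.
  ring.
have := telescope_sumr (hsum_cert n) (leq0n n.+2).
rewrite cert0 certN subrr.
under eq_bigr => k _ do rewrite hsum_term_telescope.
rewrite big_split /= sumrB -!mulr_sumr moment_shift big_nat_recr //=.
rewrite [hsum_term n n.+1]/hsum_term bin_small // mulr0 !mul0r addr0.
by move/eqP; rewrite addr_eq0 => /eqP ->; rewrite mulNr.
Qed.

Definition hsum_closed (n : nat) : rat :=
  (3 * n%:R) / ((2 : rat) ^+ (1 + 2 * n) * (1 - 4 * n%:R ^+ 2))
    * ('C(1 + 2 * n, n))%:R
    * (3 * harm n - 4 * harm (1 + 2 * n)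
       - (16 * n%:R) / (1 - 4 * n%:R ^+ 2)
       - (2 - 14 * n%:R) / (3 * n%:R))
  + 1 / (1 + n%:R).

Lemma hsum1 : hsum 1 = hsum_closed 1.
Proof. by apply/eqP; rewrite /hsum /hsum_closed /hsum_term /harm !unlock; vm_compute. Qed.

Lemma expr2_odd m : (2 : rat) ^+ (1 + 2 * m) = 2 * 4 ^+ m.
Proof. by rewrite exprD exprM expr1 -natrX. Qed.

Lemma hsum_closedS n :
  (2 * n.+1%:R - 1) * (n.+1%:R + 1) / 2 * hsum_closed n.+1
    - n.+1%:R * (n.+1%:R + 2) * hsum_closed n.+2
  = - (1 / 2) * (cbin_moment n.+2 + 1).
Proof.
have n_ge0 := ler0n rat n.
rewrite cbin_momentE /hsum_closed (harmS n.+1) (harm_oddS n.+1).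
rewrite (natr_bin_odd_central n.+2) (natr_bin_centralS n.+1) (natr_bin_odd_central n.+1).
rewrite !expr2_odd [4 ^+ n.+2]exprS -!natr1.
by field; field_nonzero.
Qed.

Lemma hsumE n : hsum n.+1 = hsum_closed n.+1.
Proof.
elim: n => [|n IH]; first exact: hsum1.
have n_ge0 := ler0n rat n.
have nz : n.+1%:R * (n.+1%:R + 2) != 0 :> rat.
  by rewrite -natr1; field_nonzero.
have := hsumS n.+1; rewrite IH -(hsum_closedS n).
by move/addrI/oppr_inj/(mulfI nz).
Qed.

Theorem theorem11 (n : nat) (hn : (1 <= n)%N) :
  \sum_(0 <= k < n.+1)
     (- (1 / 4 : rat)) ^+ k * ('C(n, k))%:R * ('C(1 + 2 * k, k))%:R
       * k%:R * harm (1 + 2 * k)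
  = (3 * n%:R) / ((2 : rat) ^+ (1 + 2 * n) * (1 - 4 * n%:R ^+ 2))
      * ('C(1 + 2 * n, n))%:R
      * (3 * harm n - 4 * harm (1 + 2 * n)
         - (16 * n%:R) / (1 - 4 * n%:R ^+ 2)
         - (2 - 14 * n%:R) / (3 * n%:R))
    + 1 / (1 + n%:R).
Proof. by case: n hn => // n _; exact: hsumE. Qed.
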